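(* Let $n\ge2$, $N\ge0$ an integer, $0\le\alpha_0<\alpha_1<\dots<\alpha_N$ real numbers, $\bar A_0,\dots,\bar A_N$ real $n\times n$ matrices, and for each $k$ let $F_k$ be either $F_{\bar A_k,\alpha_k}$ or (only when $\bar A_k$ is symmetric positive definite) $\widetilde F_{\bar A_k,\alpha_k}$. Let $A_1,\dots,A_n$ be nonzero $n\times n$ matrices and $G_B$ as in the context. Let $F:\mathbb R^n\to\mathbb R^n$ be one of: (1) $F=G_B$; (2) $F=\sum_{k=0}^NF_k$; (3) $F=\sum_{k=0}^NF_k+G_B$. Assume: (a) in case (1), $G_B$ is $3$-monotone; (b) in case (2), $F_k$ is monotone for $0\le k\le N-1$, $\alpha_N>0$, and $F_N$ is $(\alpha_N+2)$-monotone; (c) in case (3), all $F_k$ and $G_B$ are monotone, and moreover: if $\alpha_N<1$ then $G_B$ is $3$-monotone; if $\alpha_N>1$ then $F_N$ is $(\alpha_N+2)$-monotone; if $\alpha_N=1$ then $F_N$ or $G_B$ is $3$-monotone. Let $\beta=1$ in case (1), $\beta=\alpha_N$ in case (2), $\beta=\max\{\alpha_N,1\}$ in case (3). Then there are $c_1,c_2>0$ such that for all $u,v\in\mathbb R^n$, $$|F(u)-F(v)|\le c_1(1+|u|^\beta+|v|^\beta)|u-v|,\qquad (F(u)-F(v))\cdot(u-v)\ge c_2|u-v|^{\beta+2}.$$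
   Context: $|\cdot|$ is the Euclidean norm. $F_{A,\alpha}(u)=|u|^\alpha Au$ for $\alpha>0$ and $F_{A,0}(u)=Au$; for symmetric positive definite $A$, $\widetilde F_{A,\alpha}(u)=|A^{1/2}u|^\alpha Au$ for $\alpha>0$ and $\widetilde F_{A,0}(u)=Au$. $B(u,v,w)=\mathrm{diag}[u^TA_1v,\dots,u^TA_nv]\,w$; $G_B(0)=0$ and $G_B(u)=B(u,u,u)/|u|$ for $u\ne0$. A map $F$ is monotone if $(F(u)-F(v))\cdot(u-v)\ge0$ for all $u,v$; for $\gamma>0$ it is $\gamma$-monotone if there is $C>0$ with $(F(u)-F(v))\cdot(u-v)\ge C|u-v|^\gamma$ for all $u,v$. *)

From HB Require Import structures.
From mathcomp Require Import all_boot all_order all_algebra.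
From mathcomp Require Import all_classical all_reals.
From mathcomp Require Import exp.
From Stdlib Require Import ClassicalEpsilon.

Set Implicit Arguments.
Unset Strict Implicit.
Unset Printing Implicit Defensive.

Import Order.TTheory GRing.Theory Num.Theory.
Local Open Scope ring_scope.

Section Defs.
Variable R : realType.
Variable n : nat.

Definition dotv (u v : 'cV[R]_n) : R := \sum_(i < n) u i 0 * v i 0.

Definition enorm (u : 'cV[R]_n) : R := Num.sqrt (dotv u u).

Definition symmetricmx (A : 'M[R]_n) : Prop := A^T = A.

Definition posdef (A : 'M[R]_n) : Prop :=
  symmetricmx A /\ forall u : 'cV[R]_n, u != 0 -> 0 < dotv u (A *m u).

Definition is_sqrtmx (A S : 'M[R]_n) : Prop := posdef S /\ S *m S = A.

Definition sqrtmx (A : 'M[R]_n) : 'M[R]_n :=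
  match excluded_middle_informative (exists S, is_sqrtmx A S) with
  | left H => proj1_sig (constructive_indefinite_description _ H)
  | right _ => 0
  end.

Definition FA (A : 'M[R]_n) (alpha : R) (u : 'cV[R]_n) : 'cV[R]_n :=
  if alpha == 0 then A *m u else (enorm u `^ alpha) *: (A *m u).

Definition FAt (A : 'M[R]_n) (alpha : R) (u : 'cV[R]_n) : 'cV[R]_n :=
  if alpha == 0 then A *m u
  else (enorm (sqrtmx A *m u) `^ alpha) *: (A *m u).

Definition Bform (As : 'I_n -> 'M[R]_n) (u v w : 'cV[R]_n) : 'cV[R]_n :=
  \col_(i < n) (dotv u (As i *m v) * w i 0).

Definition GB (As : 'I_n -> 'M[R]_n) (u : 'cV[R]_n) : 'cV[R]_n :=
  if u == 0 then 0 else (enorm u)^-1 *: Bform As u u u.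

Definition monotone (F : 'cV[R]_n -> 'cV[R]_n) : Prop :=
  forall u v, 0 <= dotv (F u - F v) (u - v).

Definition gmonotone (gamma : R) (F : 'cV[R]_n -> 'cV[R]_n) : Prop :=
  exists C : R, 0 < C /\
    forall u v, C * enorm (u - v) `^ gamma <= dotv (F u - F v) (u - v).

End Defs.

Inductive fcase := Case1 | Case2 | Case3.

From HB Require Import structures.
From mathcomp Require Import all_boot all_order all_algebra.
From mathcomp Require Import all_classical all_reals.
From mathcomp Require Import sequences exp.
From mathcomp Require Import ring lra.
From Stdlib Require Import ClassicalEpsilon.
Import Order.TTheory GRing.Theory Num.Theory.
Local Open Scope ring_scope.
Set Implicit Arguments.
Unset Strict Implicit.
Unset Printing Implicit Defensive.

(** Both estimates hold term by term.  Every [F_k] (with or without the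
    tilde) has the form [u |-> |S u|^s A u] for a fixed matrix [S] with
    [|A v| <= k |S v|], and the mean-value bound
    [y (x^s - y^s) <= s x^s (x - y)] for [0 <= y <= x] makes such a map
    Lipschitz with constant [O(|u|^s + |v|^s)]; the components of [G_B] are
    [u_i <u, A_i u> / |u|], whose Lipschitz constant is [O(|u| + |v|)].
    As [alpha_k <= beta], all these constants are dominated by
    [1 + |u|^beta + |v|^beta].  For the lower bound, a sum of monotone maps
    of which one is [gamma]-monotone is [gamma]-monotone, and the
    hypotheses of each case provide such a decomposition with
    [gamma = beta + 2]. *)

Section Euclid.
Variable R : realType.
Variable n : nat.
Implicit Types u v w : 'cV[R]_n.

Lemma dotvC u v : dotv u v = dotv v u.
Proof. by apply: eq_bigr => i _; rewrite mulrC. Qed.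

Lemma dotvDl u v w : dotv (u + v) w = dotv u w + dotv v w.
Proof. by rewrite /dotv -big_split; apply: eq_bigr => i _; rewrite mxE mulrDl. Qed.

Lemma dotvZl (a : R) u w : dotv (a *: u) w = a * dotv u w.
Proof. by rewrite /dotv mulr_sumr; apply: eq_bigr => i _; rewrite mxE mulrA. Qed.

Lemma dotvNl u w : dotv (- u) w = - dotv u w.
Proof. by rewrite -scaleN1r dotvZl mulN1r. Qed.

Lemma dotvBl u v w : dotv (u - v) w = dotv u w - dotv v w.
Proof. by rewrite dotvDl dotvNl. Qed.

Lemma dotv0l w : dotv 0 w = 0.
Proof. by rewrite /dotv big1 // => i _; rewrite mxE mul0r. Qed.

Lemma dotvDr u v w : dotv w (u + v) = dotv w u + dotv w v.
Proof. by rewrite dotvC dotvDl !(dotvC w). Qed.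

Lemma dotvZr (a : R) u w : dotv w (a *: u) = a * dotv w u.
Proof. by rewrite dotvC dotvZl dotvC. Qed.

Lemma dotvBr u v w : dotv w (u - v) = dotv w u - dotv w v.
Proof. by rewrite dotvC dotvBl !(dotvC w). Qed.

Lemma dotv_suml (I : finType) (f : I -> 'cV[R]_n) w :
  dotv (\sum_k f k) w = \sum_k dotv (f k) w.
Proof.
exact: (big_morph (fun x => dotv x w) (fun x y => dotvDl x y w) (dotv0l w)).
Qed.

Lemma dotvv_ge0 u : 0 <= dotv u u.
Proof. by apply: sumr_ge0 => i _; rewrite -expr2 sqr_ge0. Qed.

Lemma dotvv_eq0 u : dotv u u = 0 -> forall w, dotv u w = 0.
Proof.
move=> uu0 w.
have sq_ge0 i : 0 <= u i 0 * u i 0 by rewrite -expr2 sqr_ge0.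
have ui0 := psumr_eq0P (fun i _ => sq_ge0 i) uu0.
rewrite /dotv big1 // => i _.
by have /eqP := ui0 i isT; rewrite mulf_eq0 orbb => /eqP ->; rewrite mul0r.
Qed.

Lemma enorm_ge0 u : 0 <= enorm u.
Proof. exact: sqrtr_ge0. Qed.

Lemma enorm_sqr u : enorm u ^+ 2 = dotv u u.
Proof. by rewrite sqr_sqrtr // dotvv_ge0. Qed.

Lemma enorm0 : enorm (0 : 'cV[R]_n) = 0.
Proof. by rewrite /enorm dotv0l sqrtr0. Qed.

Lemma enormN u : enorm (- u) = enorm u.
Proof. by rewrite /enorm dotvNl dotvC dotvNl opprK. Qed.

Lemma enorm_distC u v : enorm (u - v) = enorm (v - u).
Proof. by rewrite -enormN opprB. Qed.

Lemma enormZ (a : R) u : enorm (a *: u) = `|a| * enorm u.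
Proof.
by rewrite /enorm dotvZl dotvZr mulrA -expr2 sqrtrM ?sqr_ge0 // sqrtr_sqr.
Qed.

Lemma ler_dotv_enorm u v : dotv u v <= enorm u * enorm v.
Proof.
have [uu0|uu0] := eqVneq (dotv u u) 0.
  by rewrite dotvv_eq0 // mulr_ge0 // enorm_ge0.
have [vv0|vv0] := eqVneq (dotv v v) 0.
  by rewrite dotvC dotvv_eq0 // mulr_ge0 // enorm_ge0.
set x := enorm u; set y := enorm v.
have x_gt0 : 0 < x.
  rewrite lt_def enorm_ge0 andbT; apply: contra uu0 => /eqP x0.
  by rewrite -enorm_sqr -/x x0 expr0n.
have y_gt0 : 0 < y.
  rewrite lt_def enorm_ge0 andbT; apply: contra vv0 => /eqP y0.
  by rewrite -enorm_sqr -/y y0 expr0n.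
have := dotvv_ge0 (y *: u - x *: v).
rewrite !dotvBl !dotvBr !dotvZl !dotvZr -!enorm_sqr -/x -/y (dotvC v u) => sq_ge0.
have : 2 * (x * y) * dotv u v <= 2 * (x * y) * (x * y) by nra.
by rewrite ler_pM2l // mulr_gt0 // mulr_gt0.
Qed.

Lemma ler_norm_dotv u v : `|dotv u v| <= enorm u * enorm v.
Proof.
rewrite ler_norml ler_dotv_enorm andbT lerNl -dotvNl -(enormN u).
exact: ler_dotv_enorm.
Qed.

Lemma ler_enormD u v : enorm (u + v) <= enorm u + enorm v.
Proof.
rewrite -(ger0_norm (addr_ge0 (enorm_ge0 u) (enorm_ge0 v))) -sqrtr_sqr.
rewrite /enorm ler_sqrt ?sqr_ge0 // -!/(enorm _).
rewrite dotvDl !dotvDr (dotvC v u) -!enorm_sqr.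
have := ler_dotv_enorm u v; nra.
Qed.

Lemma lerB_enorm_dist u v : enorm u - enorm v <= enorm (u - v).
Proof. have := ler_enormD (u - v) v; rewrite subrK; lra. Qed.

Lemma ler_enorm_sum (I : finType) (f : I -> 'cV[R]_n) :
  enorm (\sum_k f k) <= \sum_k enorm (f k).
Proof.
apply: (big_ind2 (fun w r => enorm w <= r)) => //; first by rewrite enorm0.
by move=> ? ? ? ? h1 h2; apply: (le_trans (ler_enormD _ _)); apply: lerD.
Qed.

Lemma ler_norm_coord u i : `|u i 0| <= enorm u.
Proof.
rewrite -sqrtr_sqr /enorm ler_sqrt ?dotvv_ge0 // /dotv (bigD1 i) //= expr2.
by rewrite lerDl sumr_ge0 // => j _; rewrite -expr2 sqr_ge0.
Qed.

Lemma enorm_le_sum_coord u : enorm u <= \sum_i `|u i 0|.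
Proof.
have s0 : 0 <= \sum_i `|u i 0| by apply: sumr_ge0 => i _.
rewrite -(ger0_norm s0) -sqrtr_sqr /enorm ler_sqrt ?sqr_ge0 //.
rewrite expr2 mulr_suml; apply: ler_sum => i _.
apply: (le_trans (ler_norm _)); rewrite normrM ler_wpM2l //.
by rewrite (bigD1 i) //= lerDl sumr_ge0.
Qed.

(* The entrywise l1 norm of a matrix: a crude but explicit bound for its
   operator norm. *)
Definition mxnorm1 (A : 'M[R]_n) : R := \sum_i \sum_j `|A i j|.

Lemma mxnorm1_ge0 A : 0 <= mxnorm1 A.
Proof. by apply: sumr_ge0 => i _; apply: sumr_ge0. Qed.

Lemma enorm_mulmx_le A u : enorm (A *m u) <= mxnorm1 A * enorm u.
Proof.
apply: (le_trans (enorm_le_sum_coord _)); rewrite /mxnorm1 mulr_suml.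
apply: ler_sum => i _; rewrite mxE mulr_suml.
apply: (le_trans (ler_norm_sum _ _ _)); apply: ler_sum => j _.
by rewrite normrM ler_wpM2l // ler_norm_coord.
Qed.

Lemma ler_norm_dotv_mulmx A u v :
  `|dotv u (A *m v)| <= enorm u * (mxnorm1 A * enorm v).
Proof.
apply: (le_trans (ler_norm_dotv _ _)).
by apply: ler_wpM2l; [exact: enorm_ge0 | exact: enorm_mulmx_le].
Qed.

End Euclid.

Section PowerBounds.
Variable R : realType.

(* The mean value theorem for [x |-> x^s], via [ln a - ln b <= (a - b) / b]
   and [1 + x <= e^x]. *)
Lemma mul_powRB_le (a b s : R) : 0 <= b -> b <= a -> 0 <= s ->
  b * (a `^ s - b `^ s) <= s * a `^ s * (a - b).
Proof.
move=> b_ge0 ba s_ge0.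
have [->|b_neq0] := eqVneq b 0.
  rewrite mul0r subr0; apply: mulr_ge0; last exact: le_trans b_ge0 ba.
  by apply: mulr_ge0 => //; apply: powR_ge0.
have b_gt0 : 0 < b by rewrite lt_def b_neq0 b_ge0.
have a_gt0 : 0 < a by apply: lt_le_trans ba.
rewrite /powR (gt_eqF a_gt0) (gt_eqF b_gt0).
set E := expR (s * ln a).
have E_gt0 : 0 < E by apply: expR_gt0.
have expRb : expR (s * ln b) = E * expR (s * (ln b - ln a)).
  by rewrite /E -expRD; congr expR; ring.
have expR_ge := expR_ge1Dx (s * (ln b - ln a)).
have ln_le : b * (ln a - ln b) <= a - b.
  have := @le_ln1Dx R (a / b - 1).
  rewrite (_ : 1 + (a / b - 1) = a / b); last by ring.
  rewrite ln_div ?posrE // => h.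
  rewrite mulrC -ler_pdivlMr // mulrBl divff // h //.
  have : 0 < a / b by rewrite divr_gt0.
  lra.
rewrite expRb.
have : b * (E - E * expR (s * (ln b - ln a))) <= b * (E * (s * (ln a - ln b))).
  by apply: ler_wpM2l => //; rewrite -{1}(mulr1 E) -mulrBr ler_pM2l //; lra.
move/le_trans; apply.
have : E * s * (b * (ln a - ln b)) <= E * s * (a - b).
  by rewrite ler_wpM2l // mulr_ge0 // ltW.
lra.
Qed.

Lemma powR_le1D (x a b : R) : 0 <= x -> 0 <= a -> a <= b -> x `^ a <= 1 + x `^ b.
Proof.
move=> x_ge0 a_ge0 ab.
have [x_le1|x_gt1] := leP x 1; last first.
  by apply: (le_trans (_ : _ <= x `^ b)); rewrite ?lerDr // ler_powR // ltW.
apply: (le_trans (_ : _ <= 1)); last by rewrite lerDl powR_ge0.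
have [->|x_neq0] := eqVneq x 0; first by rewrite /powR eqxx; case: (_ == _).
by rewrite -(powRr0 x) ger_powR // lt_def x_neq0 x_ge0 x_le1.
Qed.

End PowerBounds.

Section Lipschitz.
Variable R : realType.
Variable n : nat.
Implicit Types (u v : 'cV[R]_n) (f g : 'cV[R]_n -> 'cV[R]_n).

Definition lipschitz_hom (a : R) f := exists K, 0 <= K /\ forall u v,
  enorm (f u - f v) <= K * (enorm u `^ a + enorm v `^ a) * enorm (u - v).

Definition lipschitz_poly (b : R) f := exists K, 0 <= K /\ forall u v,
  enorm (f u - f v) <= K * (1 + enorm u `^ b + enorm v `^ b) * enorm (u - v).

Lemma eq_lipschitz_hom a f g : f =1 g -> lipschitz_hom a f -> lipschitz_hom a g.
Proof. by move=> fg [K [K_ge0 HK]]; exists K; split=> // u v; rewrite -!fg. Qed.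

Lemma powR_enorm_mulmx_le (S : 'M[R]_n) (a : R) u : 0 <= a ->
  enorm (S *m u) `^ a <= mxnorm1 S `^ a * enorm u `^ a.
Proof.
move=> a_ge0; rewrite -powRM ?mxnorm1_ge0 ?enorm_ge0 //.
apply: ge0_ler_powR; rewrite ?nnegrE ?mulr_ge0 ?mxnorm1_ge0 ?enorm_ge0 //.
exact: enorm_mulmx_le.
Qed.

Lemma mul_powR_enorm_mulmxB_le (S : 'M[R]_n) (a : R) u v : 0 <= a ->
  enorm (S *m v) <= enorm (S *m u) ->
  enorm (S *m v) * (enorm (S *m u) `^ a - enorm (S *m v) `^ a)
    <= a * mxnorm1 S `^ a * mxnorm1 S * enorm u `^ a * enorm (u - v).
Proof.
move=> a_ge0 Svu; apply: (le_trans (mul_powRB_le (enorm_ge0 _) Svu a_ge0)).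
have Su_le := powR_enorm_mulmx_le S u a_ge0.
have SuB_le : enorm (S *m u) - enorm (S *m v) <= mxnorm1 S * enorm (u - v).
  by apply: (le_trans (lerB_enorm_dist _ _)); rewrite -mulmxBr enorm_mulmx_le.
have := ler_pM (mulr_ge0 a_ge0 (powR_ge0 _ _)) _ (ler_wpM2l a_ge0 Su_le) SuB_le.
rewrite subr_ge0 => /(_ Svu) /le_trans; apply.
by rewrite le_eqVlt; apply/orP; left; apply/eqP; ring.
Qed.

Lemma lipschitz_hom_scaled (S A : 'M[R]_n) (a k : R) : 0 <= a -> 0 <= k ->
  (forall v, enorm (A *m v) <= k * enorm (S *m v)) ->
  lipschitz_hom a (fun u => enorm (S *m u) `^ a *: (A *m u)).
Proof.
move=> a_ge0 k_ge0 AS_le.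
set M := mxnorm1 S `^ a; set K := M * mxnorm1 A + a * k * M * mxnorm1 S.
have M_ge0 : 0 <= M by apply: powR_ge0.
have K_ge0 : 0 <= K by rewrite !(mulr_ge0, addr_ge0) ?mxnorm1_ge0.
exists K; split=> // u v.
wlog Svu : u v / enorm (S *m v) <= enorm (S *m u).
  move=> W; have [|/ltW] := leP (enorm (S *m v)) (enorm (S *m u)); first exact: W.
  by move/W; rewrite enorm_distC (enorm_distC u) (addrC (enorm u `^ a)).
set P := enorm (S *m u) `^ a; set Q := enorm (S *m v) `^ a.
set U := enorm u `^ a; set D := enorm (u - v).
have PQ_ge0 : 0 <= P - Q by rewrite subr_ge0 ge0_ler_powR // nnegrE enorm_ge0.
have head : P * enorm (A *m (u - v)) <= M * U * (mxnorm1 A * D).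
  by apply: ler_pM; rewrite ?powR_ge0 ?enorm_ge0 ?enorm_mulmx_le ?powR_enorm_mulmx_le.
have tail : (P - Q) * enorm (A *m v) <= k * (a * M * mxnorm1 S * U * D).
  apply: (le_trans (ler_wpM2l PQ_ge0 (AS_le v))).
  rewrite mulrCA (mulrC (P - Q)) ler_wpM2l //.
  exact: mul_powR_enorm_mulmxB_le.
have -> : P *: (A *m u) - Q *: (A *m v) = P *: (A *m (u - v)) + (P - Q) *: (A *m v).
  by rewrite mulmxBr scalerBr scalerBl addrA subrK.
apply: (le_trans (ler_enormD _ _)).
rewrite !enormZ (ger0_norm (powR_ge0 _ _)) (ger0_norm PQ_ge0).
apply: (le_trans (lerD head tail)).
have -> : M * U * (mxnorm1 A * D) + k * (a * M * mxnorm1 S * U * D) = K * U * D.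
  by rewrite /K; ring.
rewrite ler_wpM2r ?enorm_ge0 // ler_wpM2l // lerDl; exact: powR_ge0.
Qed.

Lemma lipschitz_hom_FA (A : 'M[R]_n) a : 0 <= a -> lipschitz_hom a (FA A a).
Proof.
move=> a_ge0.
have AS_le v : enorm (A *m v) <= mxnorm1 A * enorm (1%:M *m v).
  by rewrite mul1mx enorm_mulmx_le.
apply: eq_lipschitz_hom (lipschitz_hom_scaled a_ge0 (mxnorm1_ge0 A) AS_le) => u.
by rewrite /FA mul1mx; case: eqP => [->|//]; rewrite powRr0 scale1r.
Qed.

(* When [A] has no SPD square root, [sqrtmx A = 0]; then [FAt A a] is [A u]
   for [a = 0] and identically [0] otherwise. *)
Lemma lipschitz_hom_FAt (A : 'M[R]_n) a : 0 <= a -> lipschitz_hom a (FAt A a).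
Proof.
move=> a_ge0; rewrite /FAt /sqrtmx.
case: excluded_middle_informative => [sqrtA|_].
  set S := proj1_sig _.
  have SS : S *m S = A.
    by rewrite /S; case: (proj2_sig (constructive_indefinite_description _ sqrtA)).
  have AS_le v : enorm (A *m v) <= mxnorm1 S * enorm (S *m v).
    by rewrite -SS -mulmxA enorm_mulmx_le.
  apply: eq_lipschitz_hom (lipschitz_hom_scaled a_ge0 (mxnorm1_ge0 S) AS_le) => u.
  by case: eqP => [->|//]; rewrite powRr0 scale1r.
have [->|a_neq0] := eqVneq a 0.
  exists (mxnorm1 A); split; first exact: mxnorm1_ge0.
  move=> u v /=; rewrite !powRr0 -mulmxBr.
  apply: (le_trans (enorm_mulmx_le _ _)); rewrite -mulrA ler_wpM2l ?mxnorm1_ge0 //.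
  by rewrite ler_peMl ?enorm_ge0 // lerDr.
exists 0; split => // u v /=.
by rewrite !mul0mx enorm0 powR0 // !scale0r subr0 enorm0 !mul0r.
Qed.

Lemma lipschitz_hom_poly a b f : 0 <= a -> a <= b ->
  lipschitz_hom a f -> lipschitz_poly b f.
Proof.
move=> a_ge0 ab [K [K_ge0 HK]]; exists (2 * K); split; first by rewrite mulr_ge0.
move=> u v; apply: (le_trans (HK u v)); apply: ler_wpM2r; first exact: enorm_ge0.
rewrite [2 * K]mulrC -mulrA; apply: ler_wpM2l => //.
have := powR_le1D (enorm_ge0 u) a_ge0 ab; have := powR_le1D (enorm_ge0 v) a_ge0 ab.
have := powR_ge0 (enorm u) b; have := powR_ge0 (enorm v) b.
lra.
Qed.

Lemma lipschitz_polyD b f g : lipschitz_poly b f -> lipschitz_poly b g ->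
  lipschitz_poly b (fun u => f u + g u).
Proof.
move=> [K [K_ge0 HK]] [L [L_ge0 HL]]; exists (K + L); split; first exact: addr_ge0.
move=> u v; rewrite opprD addrACA mulrDl mulrDl.
exact: le_trans (ler_enormD _ _) (lerD (HK u v) (HL u v)).
Qed.

Lemma lipschitz_poly_sum b (I : finType) (f : I -> 'cV[R]_n -> 'cV[R]_n) :
  (forall k, lipschitz_poly b (f k)) -> lipschitz_poly b (fun u => \sum_k f k u).
Proof.
move=> /choice [K HK]; exists (\sum_k K k); split.
  by apply: sumr_ge0 => k _; case: (HK k).
move=> u v; rewrite -sumrB !mulr_suml; apply: (le_trans (ler_enorm_sum _)).
by apply: ler_sum => k _; case: (HK k) => _; apply.
Qed.

End Lipschitz.

Section Convection.
Variable R : realType.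
Variable n : nat.
Implicit Types (A : 'M[R]_n) (u v : 'cV[R]_n).

(* [qratio A 0 = 0] since [0^-1 = 0]. *)
Definition qratio A u : R := (enorm u)^-1 * dotv u (A *m u).

Lemma GB_coordE (As : 'I_n -> 'M[R]_n) u :
  GB As u = \col_i (qratio (As i) u * u i 0).
Proof.
apply/matrixP => i j; rewrite /GB !mxE.
by case: eqP => [->|_]; rewrite !mxE ?mulr0 // /qratio mulrA.
Qed.

Lemma norm_qratio_le A u : `|qratio A u| <= mxnorm1 A * enorm u.
Proof.
rewrite /qratio normrM ger0_norm ?invr_ge0 ?enorm_ge0 //.
have [->|u_neq0] := eqVneq (enorm u) 0; first by rewrite invr0 mul0r mulr0.
have u_gt0 : 0 < enorm u by rewrite lt_def u_neq0 enorm_ge0.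
by rewrite ler_pdivrMl // ler_norm_dotv_mulmx.
Qed.

Lemma norm_qformB_le A u v :
  `|dotv u (A *m u) - dotv v (A *m v)|
    <= mxnorm1 A * (enorm u + enorm v) * enorm (u - v).
Proof.
have -> : dotv u (A *m u) - dotv v (A *m v)
          = dotv u (A *m (u - v)) + dotv (u - v) (A *m v).
  by rewrite mulmxBr dotvBr dotvBl addrA subrK.
apply: (le_trans (ler_normD _ _)).
have := lerD (ler_norm_dotv_mulmx A u (u - v)) (ler_norm_dotv_mulmx A (u - v) v).
by move/le_trans; apply; rewrite le_eqVlt; apply/orP; left; apply/eqP; ring.
Qed.

Lemma norm_qratioB_le A u v :
  `|qratio A u - qratio A v| <= 3 * mxnorm1 A * enorm (u - v).
Proof.
wlog vu : u v / enorm v <= enorm u.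
  move=> W; have [|/ltW] := leP (enorm v) (enorm u); first exact: W.
  by move/W; rewrite distrC enorm_distC.
set x := enorm u; set y := enorm v; set D := enorm (u - v); set m := mxnorm1 A.
have m_ge0 : 0 <= m by apply: mxnorm1_ge0.
have D_ge0 : 0 <= D by apply: enorm_ge0.
have y_ge0 : 0 <= y by apply: enorm_ge0.
have xyD : x - y <= D by apply: lerB_enorm_dist.
have [y0|y_neq0] := eqVneq y 0.
  rewrite {2}/qratio -/y y0 invr0 mul0r subr0.
  apply: (le_trans (norm_qratio_le _ _)); rewrite -/x -/m.
  have : m * x <= m * D by rewrite ler_wpM2l //; lra.
  have : 0 <= m * D by rewrite mulr_ge0.
  lra.
have y_gt0 : 0 < y by rewrite lt_def y_neq0.
have x_gt0 : 0 < x by apply: lt_le_trans vu.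
set a := dotv u (A *m u); set b := dotv v (A *m v).
have ab_le : `|a - b| <= m * (x + y) * D by apply: norm_qformB_le.
have b_le : `|b| <= y * (m * y) by apply: ler_norm_dotv_mulmx.
have xy_ge0 : 0 <= x - y by rewrite subr_ge0.
have -> : qratio A u - qratio A v = (a - b) / x + b * (y - x) / (x * y).
  by rewrite /qratio -/x -/y -/a -/b; field; rewrite (gt_eqF x_gt0) (gt_eqF y_gt0).
apply: (le_trans (ler_normD _ _)).
have first_le : `|(a - b) / x| <= 2 * m * D.
  rewrite normrM [`|x^-1|]ger0_norm ?invr_ge0 ?(ltW x_gt0) // ler_pdivrMr //.
  apply: (le_trans ab_le).
  have := mulr_ge0 (mulr_ge0 m_ge0 D_ge0) xy_ge0; lra.
have second_le : `|b * (y - x) / (x * y)| <= m * D.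
  have xy_gt0 : 0 < x * y by rewrite mulr_gt0.
  rewrite normrM [`|(x * y)^-1|]ger0_norm ?invr_ge0 ?(ltW xy_gt0) //.
  rewrite ler_pdivrMr // normrM distrC (ger0_norm xy_ge0).
  have := ler_wpM2r xy_ge0 b_le.
  have : y * (x - y) <= x * D by apply: ler_pM.
  move/(ler_wpM2l (mulr_ge0 m_ge0 y_ge0)).
  lra.
have := lerD first_le second_le; lra.
Qed.

Lemma lipschitz_hom_GB (As : 'I_n -> 'M[R]_n) : lipschitz_hom 1 (GB As).
Proof.
exists (\sum_i 3 * mxnorm1 (As i)); split.
  by apply: sumr_ge0 => i _; rewrite mulr_ge0 ?mxnorm1_ge0.
move=> u v; rewrite !powRr1 ?enorm_ge0 // !GB_coordE.
apply: (le_trans (enorm_le_sum_coord _)); rewrite !mulr_suml.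
apply: ler_sum => i _; rewrite !mxE.
set x := enorm u; set y := enorm v; set D := enorm (u - v); set m := mxnorm1 (As i).
have m_ge0 : 0 <= m by apply: mxnorm1_ge0.
have D_ge0 : 0 <= D by apply: enorm_ge0.
have x_ge0 : 0 <= x by apply: enorm_ge0.
have y_ge0 : 0 <= y by apply: enorm_ge0.
have -> : qratio (As i) u * u i 0 - qratio (As i) v * v i 0 =
  qratio (As i) u * (u i 0 - v i 0) + (qratio (As i) u - qratio (As i) v) * v i 0.
  by ring.
apply: (le_trans (ler_normD _ _)).
rewrite (normrM (qratio _ u)) (normrM (qratio _ u - _)).
have uv_i : `|u i 0 - v i 0| <= D by have := ler_norm_coord (u - v) i; rewrite !mxE.
have := ler_pM (normr_ge0 _) (normr_ge0 _) (norm_qratio_le (As i) u) uv_i.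
have := ler_pM (normr_ge0 _) (normr_ge0 _) (norm_qratioB_le (As i) u v)
  (ler_norm_coord v i).
rewrite -/x -/y -/m -/D => f2 f1.
have : 0 <= m * x * D by rewrite !mulr_ge0.
have : 0 <= m * y * D by rewrite !mulr_ge0.
have -> : 3 * m * (x + y) * D = m * x * D + 3 * m * D * y + 2 * (m * x * D) by ring.
lra.
Qed.

End Convection.

Section Monotone.
Variable R : realType.
Variable n : nat.
Implicit Types (f g : 'cV[R]_n -> 'cV[R]_n) (gamma : R).

Lemma dotv_sumB (I : finType) (f : I -> 'cV[R]_n -> 'cV[R]_n) u v w :
  dotv (\sum_k f k u - \sum_k f k v) w = \sum_k dotv (f k u - f k v) w.
Proof. by rewrite -sumrB dotv_suml. Qed.

Lemma monotone_sum (I : finType) (f : I -> 'cV[R]_n -> 'cV[R]_n) :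
  (forall k, monotone (f k)) -> monotone (fun u => \sum_k f k u).
Proof. by move=> mon u v; rewrite dotv_sumB; apply: sumr_ge0 => k _; apply: mon. Qed.

Lemma gmonotone_sum gamma (I : finType) (f : I -> 'cV[R]_n -> 'cV[R]_n) j :
  (forall k, k != j -> monotone (f k)) -> gmonotone gamma (f j) ->
  gmonotone gamma (fun u => \sum_k f k u).
Proof.
move=> mon [C [C_gt0 HC]]; exists C; split => // u v.
rewrite dotv_sumB (bigD1 j) //=; apply: (le_trans (HC u v)).
by rewrite lerDl sumr_ge0 // => k kj; apply: mon kj u v.
Qed.

Lemma gmonotoneDl gamma f g : gmonotone gamma f -> monotone g ->
  gmonotone gamma (fun u => f u + g u).
Proof.
move=> [C [C_gt0 HC]] mon; exists C; split => // u v.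
rewrite opprD addrACA dotvDl; apply: (le_trans (HC u v)).
by rewrite lerDl; apply: mon.
Qed.

Lemma gmonotoneDr gamma f g : monotone f -> gmonotone gamma g ->
  gmonotone gamma (fun u => f u + g u).
Proof.
move=> monf /gmonotoneDl /(_ monf) [C [C_gt0 HC]]; exists C; split => // u v.
by rewrite (addrC (f u)) (addrC (f v)).
Qed.

Lemma lipschitz_poly_gmonotone_bounds b f :
  lipschitz_poly b f -> gmonotone (b + 2) f ->
  exists c1 c2 : R, 0 < c1 /\ 0 < c2 /\ forall u v : 'cV[R]_n,
    enorm (f u - f v) <= c1 * (1 + enorm u `^ b + enorm v `^ b) * enorm (u - v)
    /\ c2 * enorm (u - v) `^ (b + 2) <= dotv (f u - f v) (u - v).
Proof.
move=> [K [K_ge0 HK]] [C [C_gt0 HC]]; exists (K + 1), C.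
split; first exact: ltr_wpDl. split=> // u v; split=> //.
apply: (le_trans (HK u v)); apply: ler_wpM2r; first exact: enorm_ge0.
by apply: ler_wpM2r; rewrite ?lerDl // !addr_ge0 ?powR_ge0.
Qed.

End Monotone.

Lemma incr_ord_bounds (R : realType) (N : nat) (a : 'I_N.+1 -> R) :
  (forall i j : 'I_N.+1, (i < j)%N -> a i < a j) ->
  forall k, a ord0 <= a k <= a ord_max.
Proof.
move=> incr k; apply/andP; split.
  have [k0|k_gt0] := posnP k; last exact: ltW (incr ord0 k k_gt0).
  by rewrite (_ : k = ord0) //; apply: ord_inj.
have [k_ltN|k_geN] := ltnP k N; first exact: ltW (incr k ord_max k_ltN).
rewrite (_ : k = ord_max) //; apply/ord_inj/eqP.
by rewrite eqn_leq k_geN -ltnS ltn_ord.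
Qed.

Lemma ord_neq_max_lt (N : nat) (k : 'I_N.+1) : k != ord_max -> (k < N)%N.
Proof.
by move=> k_neq; rewrite ltn_neqAle -ltnS ltn_ord andbT; apply: contra k_neq => /eqP k_N; apply/eqP/ord_inj.
Qed.

Theorem mainTheorem14 (R : realType) (n N : nat) (hn : (2 <= n)%N)
  (alpha : 'I_N.+1 -> R) (Abar : 'I_N.+1 -> 'M[R]_n)
  (tilde : 'I_N.+1 -> bool) (As : 'I_n -> 'M[R]_n) (c : fcase)
  (halpha0 : 0 <= alpha ord0)
  (halpha_inc : forall i j : 'I_N.+1, (i < j)%N -> alpha i < alpha j)
  (htilde : forall k, tilde k -> posdef (Abar k))
  (hAs : forall i, As i != 0) :
  let Fk k := if tilde k then FAt (Abar k) (alpha k) else FA (Abar k) (alpha k) in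
  let G := GB As in
  let F := match c with
           | Case1 => G
           | Case2 => fun u => \sum_(k < N.+1) Fk k u
           | Case3 => fun u => \sum_(k < N.+1) Fk k u + G u
           end in
  let aN := alpha ord_max in
  let beta := match c with
              | Case1 => 1
              | Case2 => aN
              | Case3 => Num.max aN 1
              end in
  match c with
  | Case1 => gmonotone 3 G
  | Case2 => (forall k : 'I_N.+1, (k < N)%N -> monotone (Fk k)) /\
             0 < aN /\ gmonotone (aN + 2) (Fk ord_max)
  | Case3 => (forall k, monotone (Fk k)) /\ monotone G /\
             (aN < 1 -> gmonotone 3 G) /\
             (1 < aN -> gmonotone (aN + 2) (Fk ord_max)) /\
             (aN = 1 -> gmonotone 3 (Fk ord_max) \/ gmonotone 3 G)
  end ->
  exists c1 c2 : R, 0 < c1 /\ 0 < c2 /\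
    forall u v : 'cV[R]_n,
      enorm (F u - F v) <= c1 * (1 + enorm u `^ beta + enorm v `^ beta) * enorm (u - v)
      /\ c2 * enorm (u - v) `^ (beta + 2) <= dotv (F u - F v) (u - v).
Proof.
move=> Fk G F aN beta hyp.
have /all_and2 [alpha0_le alpha_le_aN] := fun k => andP (incr_ord_bounds halpha_inc k).
have alpha_ge0 k : 0 <= alpha k := le_trans halpha0 (alpha0_le k).
have lipFsum b : aN <= b -> lipschitz_poly b (fun u => \sum_k Fk k u).
  move=> aN_le_b; apply: lipschitz_poly_sum => k.
  apply: (lipschitz_hom_poly (alpha_ge0 k) (le_trans (alpha_le_aN k) aN_le_b)).
  by rewrite /Fk; case: (tilde k);
    [exact: lipschitz_hom_FAt | exact: lipschitz_hom_FA].
have lipG b : 1 <= b -> lipschitz_poly b G.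
  by move=> b_ge1; apply: lipschitz_hom_poly ler01 b_ge1 (lipschitz_hom_GB As).
have three : (1 + 2 : R) = 3 by [].
suff [F_lip F_mon] : lipschitz_poly beta F /\ gmonotone (beta + 2) F.
  exact: lipschitz_poly_gmonotone_bounds.
rewrite /F /beta {F beta}; case: c hyp => /=.
- by rewrite three; split; first exact: lipG.
- case=> mon [_ FN_mon]; split; first exact: lipFsum.
  by apply: gmonotone_sum FN_mon => k /ord_neq_max_lt; apply: mon.
- case=> mon [G_mon [G_mon3 [FN_mon FN_or_G_mon3]]]; split.
    by apply: lipschitz_polyD; [apply: lipFsum | apply: lipG];
      rewrite le_max ?lexx ?orbT.
  have [aN_lt1|aN_gt1|aN1] := ltgtP aN 1.
  + by rewrite three; exact: gmonotoneDr (monotone_sum mon) (G_mon3 aN_lt1).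
  + exact: gmonotoneDl (gmonotone_sum (fun k _ => mon k) (FN_mon aN_gt1)) G_mon.
  + rewrite aN1 three.
    case: (FN_or_G_mon3 aN1) => [FN3|G3].
      exact: gmonotoneDl (gmonotone_sum (fun k _ => mon k) FN3) G_mon.
    exact: gmonotoneDr (monotone_sum mon) G3.
Qed.
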